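(* Let $R$ be a commutative ring, $M$ an $R$-module, $C$ an $R$-linear relation on $M$, and $(X\mid\rho)$ a reduction of $(M,C)$. Then $\rho$ defines a morphism $(X,\mathrm{graph}(T_X))\to(M,C)$ in $\mathrm{Rel}_R$, where $T_X(x)=Tx$. Furthermore, if $(X\mid\rho)$ meets in the radical, then there is a short exact sequence of $R[T,T^{-1}]$-modules $0\to\mathrm{rad}(X)\to X\to C^\sharp/C^\flat\to0$, where the first map is the inclusion and the second is $x\mapsto\rho(x)+C^\flat$.
   Context: An $R$-linear relation on $M$ is a submodule $C\subseteq M\oplus M$; $Cm=\{m':(m,m')\in C\}$, $C^{-1}=\{(y,x):(x,y)\in C\}$, $\mathrm{graph}(f)=\{(x,f(x))\}$. $\mathrm{Rel}_R$: objects pairs $(M,C)$, morphisms $(L,B)\to(M,C)$ the $R$-linear $f$ with $(f(x),f(y))\in C$ whenever $(x,y)\in B$. $C''$: the $m\in M$ admitting $(m_n)_{n\in\mathbb{N}}$ with $m_0=m$, $m_{n+1}\in Cm_n$ for all $n$; $C'$: those admitting such a sequence with $m_n=0$ for $n\gg0$; $C^\sharp=C''\cap(C^{-1})''$, $C^\flat=C''\cap(C^{-1})'+(C^{-1})''\cap C'$. $C^\sharp/C^\flat$ is an $R[T,T^{-1}]$-module with $T$ acting by the automorphism $m+C^\flat\mapsto m'+C^\flat$ where $m'\in C^\sharp\cap(C^\flat+Cm)$. A reduction of $(M,C)$ is a pair $(X\mid\rho)$, $X$ an $R[T,T^{-1}]$-module, $\rho\colon X\to M$ $R$-linear, with $C^\sharp=C^\flat+\mathrm{im}(\rho)$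 and $\rho(Tx)\in C\rho(x)$ for all $x$; it meets in the radical if $\{x\in X:\rho(x)\in C^\flat\}=\mathrm{rad}(X)$, the radical of $X$ as an $R$-module. *)

From HB Require Import structures.
From mathcomp Require Import all_boot all_algebra.
Set Implicit Arguments. Unset Strict Implicit. Unset Printing Implicit Defensive.
Import GRing.Theory.
Local Open Scope ring_scope.

Definition is_submod (R : comPzRingType) (M : lmodType R) (N : M -> Prop) : Prop :=
  [/\ N 0, (forall x y, N x -> N y -> N (x + y)) &
      (forall (r : R) x, N x -> N (r *: x))].

(* An R-linear relation on M: a submodule C of M (+) M, as a binary predicate. *)
Definition is_linrel (R : comPzRingType) (M : lmodType R) (C : M -> M -> Prop) : Prop :=
  [/\ C 0 0, (forall a b c d, C a b -> C c d -> C (a + c) (b + d)) &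
      (forall (r : R) a b, C a b -> C (r *: a) (r *: b))].

Definition relinv (M : Type) (C : M -> M -> Prop) : M -> M -> Prop :=
  fun x y => C y x.

Definition graph (X : Type) (f : X -> X) : X -> X -> Prop := fun x y => y = f x.

Definition rel_morph (R : comPzRingType) (L M : lmodType R)
  (B : L -> L -> Prop) (C : M -> M -> Prop) (f : {linear L -> M}) : Prop :=
  forall x y, B x y -> C (f x) (f y).

Definition Cpp (M : Type) (C : M -> M -> Prop) (m : M) : Prop :=
  exists s : nat -> M, s 0%N = m /\ forall n, C (s n) (s n.+1).

Definition Cp (R : comPzRingType) (M : lmodType R) (C : M -> M -> Prop) (m : M) : Prop :=
  exists s : nat -> M, [/\ s 0%N = m, (forall n, C (s n) (s n.+1)) &
                         exists N, forall n, (N <= n)%N -> s n = 0].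

Definition Csharp (M : Type) (C : M -> M -> Prop) (m : M) : Prop :=
  Cpp C m /\ Cpp (relinv C) m.

Definition Cflat (R : comPzRingType) (M : lmodType R) (C : M -> M -> Prop) (m : M) : Prop :=
  exists a b, [/\ m = a + b, Cpp C a /\ Cp (relinv C) a &
                             Cpp (relinv C) b /\ Cp C b].

(* The relation "m' represents T(m + C^flat)": m' in C^sharp /\ (C^flat + C m). *)
Definition Tquot (R : comPzRingType) (M : lmodType R) (C : M -> M -> Prop) (m m' : M) : Prop :=
  Csharp C m' /\ exists c y, [/\ Cflat C c, C m y & m' = c + y].

(* A reduction (X | rho): X an R[T,T^-1]-module, given as an R-module with the
   R-linear automorphism TX by which T acts. *)
Definition is_reduction (R : comPzRingType) (M : lmodType R) (C : M -> M -> Prop)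
  (X : lmodType R) (TX : {linear X -> X}) (rho : {linear X -> M}) : Prop :=
  [/\ bijective TX,
      (forall m, Csharp C m <-> exists c x, Cflat C c /\ m = c + rho x) &
      (forall x, C (rho x) (rho (TX x)))].

Definition maximal_submod (R : comPzRingType) (X : lmodType R) (N : X -> Prop) : Prop :=
  [/\ is_submod N, ~ (forall x, N x) &
      forall N', is_submod N' -> (forall x, N x -> N' x) ->
        (forall x, N' x -> N x) \/ (forall x, N' x)].

Definition modrad (R : comPzRingType) (X : lmodType R) (x : X) : Prop :=
  forall N, maximal_submod N -> N x.

Definition meets_in_radical (R : comPzRingType) (M : lmodType R) (C : M -> M -> Prop)
  (X : lmodType R) (rho : {linear X -> M}) : Prop :=
  forall x, Cflat C (rho x) <-> modrad x.

From HB Require Import structures.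
From mathcomp Require Import all_boot all_algebra.
Import GRing.Theory.
Local Open Scope ring_scope.

(* If C m m1 and m' = c + y with c in C^flat and C m y, then C 0 (m1 - y), so
   m1 - y lies in (C^-1)' (witnessed by m1 - y, 0, 0, ...) as well as in C'';
   hence m1 - m' lies in C^flat, which makes x |-> rho x + C^flat commute with
   T.  A linear isomorphism matches up the maximal submodules, so it preserves
   the radical. *)

Set Implicit Arguments.
Unset Strict Implicit.

Section Submodules.
Variables (R : comPzRingType) (M : lmodType R).

Lemma submodN (N : M -> Prop) x : is_submod N -> N x -> N (- x).
Proof. by case=> _ _ NZ Nx; rewrite -scaleN1r; apply: NZ. Qed.

Lemma submodB (N : M -> Prop) x y : is_submod N -> N x -> N y -> N (x - y).
Proof. by move=> N_sub Nx Ny; case: (N_sub) => _ ND _; apply: ND (submodN _ _). Qed.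

Lemma submod_cap (N1 N2 : M -> Prop) :
  is_submod N1 -> is_submod N2 -> is_submod (fun m => N1 m /\ N2 m).
Proof.
case=> N1_0 N1D N1Z [N2_0 N2D N2Z]; split=> [|x y [? ?] [? ?]|r x [? ?]].
- by [].
- by split; [apply: N1D | apply: N2D].
- by split; [apply: N1Z | apply: N2Z].
Qed.

Lemma submod_sum (N1 N2 : M -> Prop) : is_submod N1 -> is_submod N2 ->
  is_submod (fun m => exists a b, [/\ m = a + b, N1 a & N2 b]).
Proof.
case=> N1_0 N1D N1Z [N2_0 N2D N2Z]; split.
- by exists 0, 0; rewrite addr0.
- move=> _ _ [a [b [-> ? ?]]] [c [d [-> ? ?]]].
  by exists (a + c), (b + d); rewrite addrACA; split; [|apply: N1D|apply: N2D].
- move=> r _ [a [b [-> ? ?]]].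
  by exists (r *: a), (r *: b); rewrite scalerDr; split; [|apply: N1Z|apply: N2Z].
Qed.

Lemma submod_preim (Y : lmodType R) (N : M -> Prop) (f : Y -> M) :
  linear f -> is_submod N -> is_submod (fun x => N (f x)).
Proof.
move=> f_lin [N0 ND NZ].
have f0 : f 0 = 0.
  by have := f_lin (-1) 0 0; rewrite !scaleN1r oppr0 addr0 addNr.
have fD x y : f (x + y) = f x + f y by have := f_lin 1 x y; rewrite !scale1r.
have fZ r x : f (r *: x) = r *: f x by have := f_lin r x 0; rewrite f0 !addr0.
by split=> [|x y Nx Ny|r x Nx]; rewrite ?f0 ?fD ?fZ //; [apply: ND | apply: NZ].
Qed.

End Submodules.

Section LinearRelation.
Variables (R : comPzRingType) (M : lmodType R) (C : M -> M -> Prop).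
Hypothesis C_linrel : is_linrel C.

Lemma linrel_relinv : is_linrel (relinv C).
Proof.
case: C_linrel => C00 CD CZ; split=> [|a b c d|r a b]; rewrite /relinv //.
- exact: CD.
- exact: CZ.
Qed.

Lemma linrelB a b c d : C a b -> C c d -> C (a - c) (b - d).
Proof.
case: C_linrel => _ CD CZ Cab Ccd.
by rewrite -[- c]scaleN1r -[- d]scaleN1r; apply/CD/CZ.
Qed.

Lemma Cpp_submod : is_submod (Cpp C).
Proof.
case: C_linrel => C00 CD CZ; split.
- by exists (fun=> 0).
- move=> _ _ [s [<- Cs]] [t [<- Ct]].
  by exists (fun n => s n + t n); split => // n; apply: CD.
- move=> r _ [s [<- Cs]].
  by exists (fun n => r *: s n); split => // n; apply: CZ.
Qed.

Lemma Cp_submod : is_submod (Cp C).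
Proof.
case: C_linrel => C00 CD CZ; split.
- by exists (fun=> 0); split => //; exists 0%N.
- move=> _ _ [s [<- Cs [N1 s0]]] [t [<- Ct [N2 t0]]].
  exists (fun n => s n + t n); split => // [n|]; first exact: CD.
  exists (maxn N1 N2) => n; rewrite geq_max => /andP[n1 n2].
  by rewrite s0 // t0 // addr0.
- move=> r _ [s [<- Cs [N s0]]].
  exists (fun n => r *: s n); split => // [n|]; first exact: CZ.
  by exists N => n nN; rewrite s0 // scaler0.
Qed.

Lemma Cp_Cpp m : Cp C m -> Cpp C m.
Proof. by case=> s [s0 Cs _]; exists s. Qed.

End LinearRelation.

Section Flat.
Variables (R : comPzRingType) (M : lmodType R) (C : M -> M -> Prop).
Hypothesis C_linrel : is_linrel C.

Let Cinv_linrel := linrel_relinv C_linrel.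

Lemma Cflat_submod : is_submod (Cflat C).
Proof.
by apply: submod_sum; apply: submod_cap; apply: Cpp_submod || apply: Cp_submod.
Qed.

Lemma Cflat_Cpp m : Cflat C m -> Cpp C m.
Proof.
case=> a [b [-> [Ca _] [_ /Cp_Cpp Cb]]].
by case: (Cpp_submod C_linrel) => _ CppD _; apply: CppD.
Qed.

Lemma Cpp_image0_Cflat d : Cpp C d -> C 0 d -> Cflat C d.
Proof.
move=> Cd C0d; exists d, 0; split; first by rewrite addr0.
  split=> //; exists (fun n => if n is 0%N then d else 0); split=> //.
    by case=> [|[|n]] //; case: Cinv_linrel.
  by exists 1%N => [[|n]].
by split; [case: (Cpp_submod Cinv_linrel) | case: (Cp_submod C_linrel)].
Qed.

Lemma Tquot_Cflat_sub m m1 m' :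
  C m m1 -> Cpp C m1 -> Tquot C m m' -> Cflat C (m1 - m').
Proof.
move=> Cm1 Cpp_m1 [[Cpp_m' _] [c [y [flat_c Cy def_m']]]]; subst m'.
have Cpp_y : Cpp C y.
  have -> : y = (c + y) - c by rewrite addrC addKr.
  exact: submodB (Cpp_submod C_linrel) Cpp_m' (Cflat_Cpp flat_c).
have C0_m1y : C 0 (m1 - y) by rewrite -(subrr m); apply: linrelB.
have flat_m1y : Cflat C (m1 - y).
  by apply: Cpp_image0_Cflat => //; apply: submodB (Cpp_submod C_linrel) _ _.
by rewrite opprD addrA addrAC; apply: submodB Cflat_submod _ _.
Qed.

End Flat.

Section Radical.
Variables (R : comPzRingType) (X Y : lmodType R).

Lemma modrad_submod : is_submod (@modrad R X).
Proof.
split.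
- by move=> N [[]].
- move=> x y rx ry N maxN; case: (maxN) => [[_ ND _] _ _].
  exact: ND (rx _ maxN) (ry _ maxN).
- move=> r x rx N maxN; case: (maxN) => [[_ _ NZ] _ _].
  exact: NZ (rx _ maxN).
Qed.

Lemma maximal_submod_preim (N : Y -> Prop) (f : X -> Y) (g : Y -> X) :
  linear f -> linear g -> cancel f g -> cancel g f ->
  maximal_submod N -> maximal_submod (fun x => N (f x)).
Proof.
move=> f_lin g_lin fK gK [N_sub N_proper N_max]; split.
- exact: submod_preim.
- by move=> Nf; apply: N_proper => y; rewrite -(gK y).
- move=> N' N'_sub NfN'.
  have N_N'g x : N x -> N' (g x) by move=> Nx; apply: NfN'; rewrite gK.
  have [N'g_N|N'g_all] := N_max _ (submod_preim g_lin N'_sub) N_N'g.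
  + by left => x N'x; apply: N'g_N; rewrite fK.
  + by right => x; rewrite -(fK x).
Qed.

Lemma modrad_can (f : X -> Y) (g : Y -> X) :
  linear f -> linear g -> cancel f g -> cancel g f ->
  forall x, modrad x -> modrad (f x).
Proof.
move=> f_lin g_lin fK gK x rx N maxN.
exact: rx (maximal_submod_preim f_lin g_lin fK gK maxN).
Qed.

End Radical.

Lemma modrad_iso (R : comPzRingType) (X Y : lmodType R) (f : {linear X -> Y}) :
  bijective f -> forall x, modrad x <-> modrad (f x).
Proof.
case=> g fK gK x; have g_lin := can2_linear fK gK.
split; first exact: (modrad_can (linearP f) g_lin fK gK).
by move/(modrad_can g_lin (linearP f) gK fK); rewrite fK.
Qed.

Unset Implicit Arguments.

Theorem lemma4p9 (R : comPzRingType) (M : lmodType R) (C : M -> M -> Prop)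
  (X : lmodType R) (TX : {linear X -> X}) (rho : {linear X -> M}) :
  is_linrel C -> is_reduction C TX rho ->
  rel_morph (graph TX) C rho /\
  (meets_in_radical C rho ->
     (* rad(X) is an R[T,T^-1]-submodule, so the inclusion is a morphism *)
     [/\ is_submod (@modrad R X) /\ (forall x, modrad x <-> modrad (TX x)),
     (* x |-> rho x + C^flat is a well-defined map X -> C^sharp/C^flat
        that is T-equivariant (it is R-linear since rho is) *)
         (forall x, Csharp C (rho x)),
         (forall x m', Tquot C (rho x) m' -> Cflat C (rho (TX x) - m')),
     (* exactness at X: kernel = rad(X) *)
         (forall x, Cflat C (rho x) <-> modrad x) &
     (* surjectivity onto C^sharp/C^flat *)
         (forall m, Csharp C m -> exists x, Cflat C (m - rho x))]).
Proof.
move=> C_linrel [TX_bij sharpE C_rhoT].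
split=> [x _ -> | rad_ker]; first exact: C_rhoT.
have flat0 : Cflat C 0 by case: (Cflat_submod C_linrel).
have sharp_rho x : Csharp C (rho x) by apply/sharpE; exists 0, x; rewrite add0r.
split=> //.
- by split; [exact: modrad_submod | exact: modrad_iso].
- move=> x m'; apply: Tquot_Cflat_sub => //; exact: (sharp_rho (TX x)).1.
- by move=> m /sharpE [c [x [flat_c ->]]]; exists x; rewrite addrK.
Qed.
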